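(* Let $R$ be an associative ring with unity and let $K$ be a class of left $R$-modules closed under finite direct sums, pure submodules and isomorphisms. The following are equivalent: (1) $K$ is closed under pushouts of pure embeddings in $R$-Mod, i.e. whenever $M,N_1,N_2\in K$ and $f_1:M\to N_1$, $f_2:M\to N_2$ are pure embeddings, the pushout $(N_1\oplus N_2)/\{(f_1(m),-f_2(m)):m\in M\}$ belongs to $K$; (2) $K$ is closed under pure epimorphic images.
   Context: A pure embedding is an injective homomorphism whose image is a pure submodule (every pp-formula with parameters in the image true in the codomain is true in the image). A pure epimorphism is a surjective homomorphism whose kernel is a pure submodule; $K$ is closed under pure epimorphic images if whenever $B\in K$ and $B\to C$ is a pure epimorphism, $C\in K$. *)

From HB Require Import structures.
From mathcomp Require Import all_boot all_order all_algebra.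
Set Implicit Arguments. Unset Strict Implicit. Unset Printing Implicit Defensive.
Import GRing.Theory.
Local Open Scope ring_scope.

(* The pp-formula  phi(x) := exists y, A x + B y = 0  (a finite system of
   R-linear equations), evaluated in M at the tuple a with witnesses b. *)
Definition pp_eqs (R : pzRingType) (M : lmodType R) (k n m : nat)
  (A : 'M[R]_(k, n)) (B : 'M[R]_(k, m)) (a : 'I_n -> M) (b : 'I_m -> M) : Prop :=
  forall i : 'I_k, \sum_(j < n) A i j *: a j + \sum_(l < m) B i l *: b l = 0.

Definition pure_in (R : pzRingType) (M : lmodType R) (S : M -> Prop) : Prop :=
  forall (k n m : nat) (A : 'M[R]_(k, n)) (B : 'M[R]_(k, m)) (a : 'I_n -> M),
    (forall j, S (a j)) ->
    (exists b : 'I_m -> M, pp_eqs A B a b) ->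
    exists b : 'I_m -> M, (forall l, S (b l)) /\ pp_eqs A B a b.

Definition pure_embedding (R : pzRingType) (M N : lmodType R)
  (f : {linear M -> N}) : Prop :=
  injective f /\ pure_in (fun y : N => exists x : M, f x = y).

Definition pure_epimorphism (R : pzRingType) (B C : lmodType R)
  (g : {linear B -> C}) : Prop :=
  (forall c : C, exists b : B, g b = c) /\ pure_in (fun x : B => g x = 0).

Definition mod_class (R : pzRingType) := lmodType R -> Prop.

Definition closed_iso (R : pzRingType) (K : mod_class R) : Prop :=
  forall (M N : lmodType R) (f : {linear M -> N}), bijective f -> K M -> K N.

Definition closed_dsum (R : pzRingType) (K : mod_class R) : Prop :=
  forall M N : lmodType R, K M -> K N -> K (M * N)%type.

(* pure submodules, up to isomorphism: domains of pure embeddings into members *)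
Definition closed_pure_sub (R : pzRingType) (K : mod_class R) : Prop :=
  forall (N M : lmodType R) (f : {linear N -> M}), pure_embedding f -> K M -> K N.

Definition closed_pure_epi (R : pzRingType) (K : mod_class R) : Prop :=
  forall (B C : lmodType R) (g : {linear B -> C}), pure_epimorphism g -> K B -> K C.

(* P (via q) is the pushout (N1 (+) N2)/{(f1 m, - f2 m) : m in M}:
   q is surjective with kernel exactly that submodule. *)
Definition is_pushout_quotient (R : pzRingType) (M N1 N2 P : lmodType R)
  (f1 : {linear M -> N1}) (f2 : {linear M -> N2}) (q : {linear (N1 * N2)%type -> P})
  : Prop :=
  (forall p : P, exists x, q x = p) /\
  (forall x : (N1 * N2)%type, q x = 0 <-> exists m : M, x = (f1 m, - f2 m)).

Definition closed_pure_pushout (R : pzRingType) (K : mod_class R) : Prop :=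
  forall (M N1 N2 : lmodType R) (f1 : {linear M -> N1}) (f2 : {linear M -> N2}),
    K M -> K N1 -> K N2 -> pure_embedding f1 -> pure_embedding f2 ->
    forall (P : lmodType R) (q : {linear (N1 * N2)%type -> P}),
      is_pushout_quotient f1 f2 q -> K P.

(* Both directions rest on one observation: in a pushout of pure embeddings
   f1 : M -> N1, f2 : M -> N2 the kernel {(f1 m, - f2 m)} of
   N1 (+) N2 -> P is pure, since a pp-formula over it can be solved in N1,
   pulled back to M through the pure embedding f1, and pushed forward again
   along m |-> (f1 m, - f2 m).  Hence (2) gives (1).  Conversely, if
   g : B -> C is a pure epimorphism with kernel L, then L is in K, and the
   pushout of L -> B along itself is B (+) C via (x, y) |-> (x + y, g x);
   so B (+) C is in K by (1), and C, a direct summand of it, is in K. *)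

From HB Require Import structures.
From mathcomp Require Import all_boot all_order all_algebra.
From Stdlib Require Import IndefiniteDescription.
Set Implicit Arguments. Unset Strict Implicit. Unset Printing Implicit Defensive.
Import GRing.Theory.
Local Open Scope ring_scope.

Arguments functional_choice {A B R}.

Section PPEquations.
Variables (R : pzRingType) (k n m : nat) (A : 'M[R]_(k, n)) (B : 'M[R]_(k, m)).

Lemma eq_pp_eqs (M : lmodType R) (a a' : 'I_n -> M) (b b' : 'I_m -> M) :
  a =1 a' -> b =1 b' -> pp_eqs A B a b -> pp_eqs A B a' b'.
Proof.
move=> eq_a eq_b ppab i; apply: etrans (ppab i).
by congr (_ + _); apply: eq_bigr => j _; rewrite ?eq_a ?eq_b.
Qed.

Lemma linear_pp_sum (M N : lmodType R) (f : {linear M -> N})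
    (a : 'I_n -> M) (b : 'I_m -> M) (i : 'I_k) :
  f (\sum_(j < n) A i j *: a j + \sum_(l < m) B i l *: b l) =
  \sum_(j < n) A i j *: f (a j) + \sum_(l < m) B i l *: f (b l).
Proof.
by rewrite linearD !linear_sum; congr (_ + _); apply: eq_bigr => j _; rewrite linearZ.
Qed.

Lemma pp_eqs_linear (M N : lmodType R) (f : {linear M -> N})
    (a : 'I_n -> M) (b : 'I_m -> M) :
  pp_eqs A B a b -> pp_eqs A B (f \o a) (f \o b).
Proof. by move=> ppab i; rewrite -linear_pp_sum ppab linear0. Qed.

Lemma pp_eqs_inj (M N : lmodType R) (f : {linear M -> N})
    (a : 'I_n -> M) (b : 'I_m -> M) :
  injective f -> pp_eqs A B (f \o a) (f \o b) -> pp_eqs A B a b.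
Proof. by move=> f_inj ppfab i; apply: f_inj; rewrite linear_pp_sum ppfab linear0. Qed.

End PPEquations.

Lemma split_pure_embedding (R : pzRingType) (M N : lmodType R)
    (f : {linear M -> N}) (r : {linear N -> M}) :
  cancel f r -> pure_embedding f.
Proof.
move=> fK; split; first exact: can_inj fK.
move=> k n m A B a a_im [b ppab].
have [x fx] := functional_choice a_im.
exists (f \o r \o b); split; first by move=> l; exists (r (b l)).
apply: (@eq_pp_eqs _ _ _ _ _ _ _ (f \o (r \o a))) => // [j|].
  by rewrite /= -fx fK.
exact/pp_eqs_linear/pp_eqs_linear.
Qed.

Section LinearPair.
Variables (R : pzRingType) (M N1 N2 : lmodType R).
Variables (f : {linear M -> N1}) (g : {linear M -> N2}).

Definition lin_pair (x : M) : (N1 * N2)%type := (f x, g x).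

Fact lin_pair_is_linear : linear lin_pair.
Proof. by move=> a x y; rewrite /lin_pair !linearP. Qed.

HB.instance Definition _ :=
  GRing.isLinear.Build R M (N1 * N2)%type _ lin_pair lin_pair_is_linear.

Lemma lin_pairE (x : M) :
  (lin_pair : {linear M -> (N1 * N2)%type}) x = (f x, g x).
Proof. by []. Qed.

End LinearPair.

Lemma pure_embedding_inr (R : pzRingType) (B C : lmodType R) :
  pure_embedding (lin_pair (\0 : {linear C -> B}) idfun).
Proof. by apply: (@split_pure_embedding _ _ _ _ snd). Qed.

Section Kernel.
Variables (R : pzRingType) (B C : lmodType R) (g : {linear B -> C}).

Definition in_ker : pred B := fun x => g x == 0.

Fact in_ker_submod_closed : subsemimod_closed in_ker.
Proof.
apply: GRing.submod_closed_semi; split=> [|a x y]; rewrite !unfold_in /=.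
  by rewrite linear0.
by rewrite linearP => /eqP-> /eqP->; rewrite scaler0 addr0.
Qed.

Definition ker_lmod := {x : B | in_ker x}.
HB.instance Definition _ := [isSub of ker_lmod for (@sval B in_ker)].
HB.instance Definition _ := [Choice of ker_lmod by <:].
HB.instance Definition _ :=
  GRing.SubChoice_isSubLmodule.Build R B in_ker ker_lmod in_ker_submod_closed.

Lemma ker_lmod_val_pure : pure_in (fun x : B => g x = 0) ->
  pure_embedding (val : {linear ker_lmod -> B}).
Proof.
move=> ker_pure; split; first exact: val_inj.
move=> k n m A A' a a_ker pp_a.
have {}a_ker j : g (a j) = 0 by have [x <-] := a_ker j; apply/eqP/(valP x).
have [b [b_ker ppab]] := ker_pure k n m A A' a a_ker pp_a.
exists b; split=> // l.
have bl_ker : in_ker (b l) by apply/eqP.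
by exists (Sub (b l) bl_ker).
Qed.

Lemma ker_pushout_quotient :
  (forall c : C, exists x : B, g x = c) ->
  is_pushout_quotient (val : {linear ker_lmod -> B}) val
    (lin_pair (fst \+ snd) (g \o fst)).
Proof.
move=> g_surj; split=> [[x c]|[x y]].
  have [z gz] := g_surj c.
  by exists (z, x - z); rewrite lin_pairE /= gz addrC subrK.
rewrite lin_pairE /=; split=> [[/addr0_eq xy gx]|[z [-> ->]]].
  have x_ker : in_ker x by apply/eqP.
  by exists (Sub x x_ker); rewrite xy.
by rewrite subrr (eqP (valP z)).
Qed.

End Kernel.

Lemma pushout_pure_epimorphism (R : pzRingType) (M N1 N2 P : lmodType R)
    (f1 : {linear M -> N1}) (f2 : {linear M -> N2})
    (q : {linear (N1 * N2)%type -> P}) :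
  pure_embedding f1 -> is_pushout_quotient f1 f2 q -> pure_epimorphism q.
Proof.
move=> [f1_inj f1_pure] [q_surj q_ker]; split=> // k n m A B a a_ker [b ppab].
have [x a_x] := functional_choice (fun j => (q_ker (a j)).1 (a_ker j)).
have pp1 : pp_eqs A B (f1 \o x) (fst \o b).
  by apply: (eq_pp_eqs _ _ (pp_eqs_linear fst ppab)) => // j; rewrite /= a_x.
have [b1 [b1_im pp_b1]] := f1_pure k n m A B (f1 \o x) (fun j => ex_intro _ _ erefl)
  (ex_intro _ _ pp1).
have [y f1y] := functional_choice b1_im.
have ppxy : pp_eqs A B x y.
  by apply: (pp_eqs_inj f1_inj); apply: (eq_pp_eqs _ _ pp_b1) => // l; rewrite /= f1y.
pose h := lin_pair f1 (\- f2).
exists (h \o y); split; first by move=> l; apply/(q_ker _).2; exists (y l).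
by apply: (eq_pp_eqs _ _ (pp_eqs_linear h ppxy)) => // j; rewrite a_x.
Qed.

Theorem lemma4p3 (R : pzRingType) (K : mod_class R)
  (Hsum : closed_dsum K) (Hpure : closed_pure_sub K) (Hiso : closed_iso K) :
  closed_pure_pushout K <-> closed_pure_epi K.
Proof.
split=> [K_pushout B C g [g_surj g_pure] KB | K_epi M N1 N2 f1 f2 _ KN1 KN2 pe1 _ P q qP].
- have pe_ker := ker_lmod_val_pure g_pure.
  have Kker := Hpure _ _ _ pe_ker KB.
  have KBC := K_pushout _ _ _ _ _ Kker KB KB pe_ker pe_ker _ _ (ker_pushout_quotient g_surj).
  exact: Hpure _ _ _ (pure_embedding_inr B C) KBC.
- exact: K_epi _ _ q (pushout_pure_epimorphism pe1 qP) (Hsum _ _ KN1 KN2).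
Qed.
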